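(* Let $H$ be an Abelian group, $X$ a simplicial set, $Z\subset X$ a simplicial subset with inclusion $i$, $j:X\to X/Z$ the quotient. Let $\alpha:X_2\to H$ be a normalized 2-cocycle such that $i^*\alpha$ is a coboundary, and let $\nu:Z_1\to H$ be a normalized 1-cochain with $\partial\nu=i^*\alpha$. Let $\tilde\nu:X_1\to H$ be $\nu$ on $Z_1$ and $0$ elsewhere, and let $\beta:(X/Z)_2\to H$ be a normalized 2-cocycle with $j^*\beta=\alpha-\partial\tilde\nu$. Let $\mathrm{sDist}_\beta(X/Z)$ be the set of distributions on the twisted product over $X/Z$ determined by $\beta$, and $\mathrm{sDist}_\alpha(X,\nu)$ the set of distributions $p$ on the twisted product over $X$ determined by $\alpha$ whose restriction to $Z$ equals $\delta^{\varphi_\nu}$. Then there is a convex isomorphism \[ \mathrm{sDist}_\beta(X/Z)\cong \mathrm{sDist}_\alpha(X,\nu). \]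
   Context: Distributions take values in $\mathbb{R}_{\ge0}$: $D(S)$ = finitely supported probability distributions on $S$, extended levelwise to simplicial sets; a distribution on a simplicial map $\pi:E\to Y$ is a simplicial map $p:Y\to D(E)$ with $D(\pi)\circ p=\delta$. $N(H)$ is the nerve of $H$ ($N(H)_n=H^n$, $d_0$ drops first entry, $d_n$ last, inner $d_i$ add adjacent entries, $s_j$ inserts $0$). A normalized $n$-cochain is a map $Y_n\to H$ vanishing on degenerate simplices; $\partial$ is the coboundary, e.g. $\partial\nu(x)=\nu(d_0x)-\nu(d_1x)+\nu(d_2x)$; $i^*,j^*$ are precomposition. A normalized 2-cocycle $\gamma$ on $Y$ determines the twisting function $\eta_1=0,\eta_2=\gamma$, $\eta_n(y)=(\gamma(d_3\cdots d_ny),\eta_{n-1}(d_1y)-\eta_{n-1}(d_0y))$, and the twisted product $N(H)\times_\eta Y$ with simplices $H^n\times Y_n$, $d_0(g,y)=(d_0g+\eta_n(y),d_0y)$ and other structure maps componentwise; $\pi_\eta$ is the projection. The restriction of $p$ to $Z$ is $p\circ i$, a distribution on the restricted bundle over $Z$ (twisted by $i^*\alpha$). A section of $\pi_\eta$ is a simplicial map $s$ with $\pi_\eta s=\mathrm{id}$; $\varphi_\nu$ denotes the unique section of the restricted bundle over $Z$ whose $H$-component on $1$-simplices is $\nu$ (in degrees $0,1,2$: $z\mapsto(0,z)$, $(\nu(z),z)$, $((\nu(d_2z),\nu(d_1z)-\nu(d_2z)),z)$), and $\delta^{\varphi_\nu}=\delta\circ\varphi_\nu$. *)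

From HB Require Import structures.
From mathcomp Require Import all_boot all_order all_algebra.
From mathcomp Require Import boolp classical_sets functions cardinality fsbigop reals.
Set Implicit Arguments. Unset Strict Implicit. Unset Printing Implicit Defensive.
Import Order.TTheory GRing.Theory Num.Theory.
Local Open Scope classical_set_scope.
Local Open Scope ring_scope.

(* Raw simplicial data: levels X_n, faces d_i : X_{n+1} -> X_n (i <= n+1),
   degeneracies s_j : X_n -> X_{n+1} (j <= n).  Indices are natural numbers;
   only in-range indices are ever used.                                  *)
Record ssdata := SSData {
  lev :> nat -> choiceType;
  face : forall n, nat -> lev n.+1 -> lev n;
  degen : forall n, nat -> lev n -> lev n.+1 }.

Definition is_sSet (X : ssdata) : Prop :=
  [/\ (forall n i j (x : X n.+2), (i < j)%N -> (j <= n.+2)%N ->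
         face i (face j x) = face j.-1 (face i x)),
      (forall n i j (x : X n), (i <= j)%N -> (j <= n)%N ->
         degen i (degen j x) = degen j.+1 (degen i x)),
      (forall n i j (x : X n.+1), (i < j)%N -> (j <= n.+1)%N ->
         face i (degen j x) = degen j.-1 (face i x)),
      (forall n j (x : X n), (j <= n)%N ->
         face j (degen j x) = x /\ face j.+1 (degen j x) = x) &
      (forall n i j (x : X n.+1), (j.+1 < i)%N -> (i <= n.+2)%N ->
         face i (degen j x) = degen j (face i.-1 x))].

Definition is_subcomplex (X : ssdata) (Z : forall n, pred (X n)) : Prop :=
  (forall n i (x : X n.+1), (i <= n.+1)%N -> x \in Z n.+1 -> face i x \in Z n) /\
  (forall n j (x : X n), (j <= n)%N -> x \in Z n -> degen j x \in Z n.+1).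

(* The quotient X/Z: in degree n, the simplices of X_n not in Z_n, plus a
   base point (None) to which all of Z is collapsed. *)
Definition qlev (X : ssdata) (Z : forall n, pred (X n)) (n : nat) : choiceType :=
  option {x : X n | x \notin Z n}.

Definition quot (X : ssdata) (Z : forall n, pred (X n)) : ssdata :=
  @SSData (qlev Z)
    (fun n i o => obind (fun x => insub (face i (val x))) o)
    (fun n j o => obind (fun x => insub (degen j (val x))) o).

Definition qproj (X : ssdata) (Z : forall n, pred (X n)) n (x : X n) : quot Z n :=
  insub x.

Section Cochains.
Variables (H : zmodType) (Y : ssdata).

Definition normalized n (f : Y n.+1 -> H) : Prop :=
  forall j (y : Y n), (j <= n)%N -> f (degen j y) = 0.

Definition cobound n (f : Y n -> H) (x : Y n.+1) : H :=
  \sum_(i < n.+2) (if odd i then - f (face i x) else f (face i x)).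

Definition cocycle n (f : Y n -> H) : Prop := forall x, cobound f x = 0.
End Cochains.

(* The nerve N(H): N(H)_n = H^n, represented as {ffun 'I_n -> H}. *)
Section Nerve.
Variable H : zmodType.

Definition gat n (g : {ffun 'I_n -> H}) (k : nat) : H :=
  if insub k is Some i then g i else 0.

(* d_i : H^{n+1} -> H^n: d_0 drops the first entry, d_{n+1} the last,
   inner d_i adds the adjacent entries i, i+1 (1-based). *)
Definition nface n (i : nat) (g : {ffun 'I_n.+1 -> H}) : {ffun 'I_n -> H} :=
  [ffun k : 'I_n => if (k.+1 < i)%N then gat g k
                    else if k.+1 == i then gat g k + gat g k.+1
                    else gat g k.+1].

(* s_j : H^n -> H^{n+1} inserts 0 at position j (0-based). *)
Definition ndegen n (j : nat) (g : {ffun 'I_n -> H}) : {ffun 'I_n.+1 -> H} :=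
  [ffun k : 'I_n.+1 => if (k < j)%N then gat g k
                       else if k == j :> nat then 0 else gat g k.-1].
End Nerve.

Section Twisted.
Variables (H : zmodType) (Y : ssdata) (gamma : Y 2%N -> H).

(* front 2-face d_3 ... d_{n+2} : Y_{n+2} -> Y_2 *)
Fixpoint front2 (n : nat) : Y n.+2 -> Y 2%N :=
  match n return Y n.+2 -> Y 2%N with
  | 0 => fun y => y
  | m.+1 => fun y => @front2 m (face m.+3 y)
  end.

(* eta n = eta_{n+1} : Y_{n+1} -> H^n *)
Fixpoint eta (n : nat) : Y n.+1 -> {ffun 'I_n -> H} :=
  match n return Y n.+1 -> {ffun 'I_n -> H} with
  | 0 => fun _ => [ffun _ => 0]
  | S n1 =>
    match n1 return (Y n1.+1 -> {ffun 'I_n1 -> H}) -> Y n1.+2 -> {ffun 'I_n1.+1 -> H} with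
    | 0 => fun _ y => [ffun _ => gamma y]
    | S m => fun rec y =>
      [ffun k : 'I_m.+2 =>
         if k == 0%N :> nat then gamma (@front2 m.+1 y)
         else gat (rec (face 1%N y) - rec (face 0%N y)) k.-1]
    end (@eta n1)
  end.

Definition tlev (n : nat) : choiceType :=
  ({ffun 'I_n -> H} * Y n)%type.

Definition tface n (i : nat) (e : tlev n.+1) : tlev n :=
  (if i == 0%N then nface 0%N e.1 + eta e.2 else nface i e.1, face i e.2).

Definition tdegen n (j : nat) (e : tlev n) : tlev n.+1 :=
  (ndegen j e.1, degen j e.2).

Definition twisted : ssdata := @SSData tlev tface tdegen.

Definition tproj n (e : twisted n) : Y n := e.2.
End Twisted.

Section Distr.
Variable R : realType.

Definition is_distr (S : choiceType) (p : S -> R) : Prop :=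
  [/\ forall s, 0 <= p s,
      finite_set (p @^-1` [set~ 0]) &
      \sum_(s \in [set: S]) p s = 1].

Definition dirac (S : choiceType) (a : S) : S -> R :=
  fun s => if s == a then 1 else 0.

Definition push (S T : choiceType) (f : S -> T) (p : S -> R) : T -> R :=
  fun t => \sum_(s \in f @^-1` [set t]) p s.

(* A levelwise family Y -> D(E) *)
Definition dfam (E : ssdata) (Y : ssdata) := forall n, Y n -> E n -> R.

Definition is_distr_on (E Y : ssdata) (pi : forall n, E n -> Y n)
  (p : dfam E Y) : Prop :=
  [/\ forall n y, is_distr (p n y),
      forall n i (y : Y n.+1), (i <= n.+1)%N ->
        push (@face E n i) (p n.+1 y) = p n (face i y),
      forall n j (y : Y n), (j <= n)%N ->
        push (@degen E n j) (p n y) = p n.+1 (degen j y) &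
      forall n (y : Y n), push (pi n) (p n y) = dirac y].

Definition dmix (E Y : ssdata) (t : R) (p q : dfam E Y) : dfam E Y :=
  fun n y e => t * p n y e + (1 - t) * q n y e.

Definition convex_iso (E1 Y1 E2 Y2 : ssdata)
  (S1 : dfam E1 Y1 -> Prop) (S2 : dfam E2 Y2 -> Prop) : Prop :=
  exists (F : dfam E1 Y1 -> dfam E2 Y2) (G : dfam E2 Y2 -> dfam E1 Y1),
  [/\ forall p, S1 p -> S2 (F p),
      forall q, S2 q -> S1 (G q),
      forall p, S1 p -> G (F p) = p,
      forall q, S2 q -> F (G q) = q &
      forall t p p', 0 <= t <= 1 -> S1 p -> S1 p' ->
        F (dmix t p p') = dmix t (F p) (F p')].
End Distr.

Section SDist.
Variables (R : realType) (H : zmodType).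

Definition sDist (Y : ssdata) (beta : Y 2%N -> H)
  (p : dfam R (twisted beta) Y) : Prop :=
  is_distr_on (R:=R) (@tproj H Y beta) p.

Definition is_Zsection (X : ssdata) (alpha : X 2%N -> H)
  (Z : forall n, pred (X n)) (sigma : forall n, X n -> {ffun 'I_n -> H}) : Prop :=
  (forall n i (z : X n.+1), (i <= n.+1)%N -> z \in Z n.+1 ->
     @face (twisted alpha) n i (sigma n.+1 z, z) = (sigma n (face i z), face i z)) /\
  (forall n j (z : X n), (j <= n)%N -> z \in Z n ->
     @degen (twisted alpha) n j (sigma n z, z) = (sigma n.+1 (degen j z), degen j z)).

(* phi_nu is the (unique) Z-section with H-component nu on 1-simplices;
   restriction of p to Z equals delta o phi_nu *)
Definition restr_is_phi (X : ssdata) (alpha : X 2%N -> H)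
  (Z : forall n, pred (X n)) (nu : X 1%N -> H) (p : dfam R (twisted alpha) X) : Prop :=
  forall sigma, is_Zsection alpha Z sigma ->
    (forall z : X 1%N, z \in Z 1%N -> sigma 1%N z = [ffun _ => nu z]) ->
    forall n (z : X n), z \in Z n -> p n z = dirac R (sigma n z, z).

Definition sDist_rel (X : ssdata) (alpha : X 2%N -> H)
  (Z : forall n, pred (X n)) (nu : X 1%N -> H) (p : dfam R (twisted alpha) X) : Prop :=
  @sDist X alpha p /\ @restr_is_phi X alpha Z nu p.
End SDist.

Definition nutilde (H : zmodType) (X : ssdata) (Z : forall n, pred (X n))
  (nu : X 1%N -> H) (x : X 1%N) : H := if x \in Z 1%N then nu x else 0.

(* Let psi x in H^n have entries nu~(x_{0,k+1}) - nu~(x_{0,k}), where x_{a,b} is the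
   edge of x spanned by its vertices a < b (and x_{0,0} contributes 0). Then psi commutes
   with the faces d_i (i > 0) and all degeneracies, while
   d_0 psi(x) + eta_{d nu~}(x) = psi(d_0 x); on Z, psi is the H-part of phi_nu. Since
   eta is additive in the cocycle and alpha = j^* beta + d nu~, the map
   (g, x) |-> (g - psi x, j x) is a simplicial map from the alpha-twisted product over X
   to the beta-twisted product over X/Z, bijective on each fiber and collapsing phi_nu
   onto the base point. Pulling distributions back along it fiberwise and pushing them
   forward along it are mutually inverse, and pushforward is affine. *)

From Pilot Require Import Defs.
From HB Require Import structures.
From mathcomp Require Import all_boot all_order all_algebra.
From mathcomp Require Import boolp classical_sets functions cardinality fsbigop reals.
From mathcomp Require Import zify.
Import Order.TTheory GRing.Theory Num.Theory.
Local Open Scope classical_set_scope.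
Local Open Scope ring_scope.

Section Pushforward.
Context {R : realType}.
Implicit Types (S T U : choiceType).

Definition supp {S} (p : S -> R) : set S := p @^-1` [set~ 0].

Lemma pushE {S T} (f : S -> T) {p : S -> R} {A : set S} t :
  supp p `<=` A -> push f p t = \sum_(s \in A) (f s == t)%:R * p s.
Proof.
move=> pA; rewrite /push -(fsbig_widen (f @^-1` [set t] `&` A) _ p) //; last first.
  by move=> s [/= fst /not_andP[//|nA]]; apply: contra_notP nA => /pA.
rewrite setIC fsbig_mkcondr; apply: eq_fsbigr => s _.
case: (eqVneq (f s) t) => fst; first by rewrite mem_set // mul1r.
by rewrite memNset ?mul0r //; apply/eqP.
Qed.

Lemma push_supp {S T} (f : S -> T) (p : S -> R) : supp (push f p) `<=` f @` supp p.
Proof.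
move=> t pt; apply: contra_notP pt => nimg; apply: fsbig1 => s /= fst.
by apply: contra_notP nimg => ps; exists s.
Qed.

Lemma push_comp {S T U} (f : S -> T) (g : T -> U) (p : S -> R) :
  finite_set (supp p) -> push g (push f p) = push (g \o f) p.
Proof.
move=> pfin; apply/funext => u.
rewrite (pushE _ _ (push_supp f p)) (pushE _ _ (@subset_refl _ (supp p))).
under eq_fsbigr => t _ do rewrite (pushE _ _ (@subset_refl _ (supp p))) mulr_fsumr.
rewrite exchange_fsbig //; last exact: finite_image.
apply: eq_fsbigr => s /set_mem ps.
rewrite -(fsbig_widen [set f s]) ?fsbig_set1 ?eqxx ?mul1r //; first by move=> _ ->; exists s.
by move=> t [_ /= /nesym /eqP/negbTE ->]; rewrite mul0r mulr0.
Qed.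

Lemma push_distr {S T} (f : S -> T) (p : S -> R) : is_distr p -> is_distr (push f p).
Proof.
move=> [p0 pfin p1]; split.
- by move=> t; apply: fsumr_ge0 => s _; exact: p0.
- exact: sub_finite_set (push_supp f p) (finite_image f pfin).
- have total U (q : U -> R) : \sum_(u \in [set: U]) q u = push (fun=> tt) q tt.
    by rewrite /push; apply: eq_fsbigl; apply/seteqP; split.
  by rewrite -p1 !total push_comp.
Qed.

Lemma push_id {S} (p : S -> R) : push id p = p.
Proof. by apply/funext => s; exact: fsbig_set1. Qed.

Lemma eq_push {S T} (f g : S -> T) (p : S -> R) :
  (forall s, p s != 0 -> f s = g s) -> push f p = push g p.
Proof.
move=> fg; apply/funext => t; rewrite !(pushE _ _ (@subset_refl _ (supp p))).
by apply: eq_fsbigr => s /set_mem ps; rewrite fg //; apply/eqP.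
Qed.

Lemma push_const {S T} (p : S -> R) (t : T) : is_distr p -> push (fun=> t) p = dirac R t.
Proof.
move=> [_ _ p1]; apply/funext => t'; rewrite /push /dirac.
case: eqP => [-> | t't]; first by rewrite -p1; apply: eq_fsbigl; apply/seteqP; split.
by rewrite (_ : _ @^-1` _ = set0) ?fsbig_set0 //; apply/seteqP; split => s //= /esym.
Qed.

Lemma push_dirac {S T} (f : S -> T) (s : S) : push f (dirac R s) = dirac R (f s).
Proof.
apply/funext => t; rewrite (@pushE _ _ f _ [set s]) ?fsbig_set1 /dirac ?eqxx ?mulr1.
  by rewrite eq_sym; case: (t == f s).
by move=> s'; rewrite /supp /dirac /=; case: (s' =P s).
Qed.

Lemma dirac_distr {S} (s : S) : is_distr (dirac R s).
Proof.
split => [s'||]; first by rewrite /dirac; case: eqP.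
  by apply: sub_finite_set (finite_set1 s) => s'; rewrite /dirac /=; case: (s' =P s).
rewrite -(fsbig_widen [set s]) ?fsbig_set1 /dirac ?eqxx // => s' [_ /= ss'].
by case: eqP.
Qed.

Lemma push_mix {S T} (f : S -> T) (p p' : S -> R) (t : R) :
  finite_set (supp p) -> finite_set (supp p') ->
  push f (fun s => t * p s + (1 - t) * p' s) =
  (fun u => t * push f p u + (1 - t) * push f p' u).
Proof.
move=> pfin p'fin; apply/funext => u.
have [pA p'A] : supp p `<=` supp p `|` supp p' /\ supp p' `<=` supp p `|` supp p'.
  by split=> s; [left | right].
rewrite (pushE _ _ pA) (pushE _ _ p'A) (@pushE _ _ f _ (supp p `|` supp p')); last first.
  move=> s /= mix; apply: contra_notP mix => /not_orP[/contra_notP p0 /contra_notP p'0].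
  by rewrite p0 ?p'0 ?mulr0 ?addr0.
rewrite !mulr_fsumr -fsbig_split; last by rewrite finite_setU.
by apply: eq_fsbigr => s _; rewrite mulrDr; congr (_ + _); exact: mulrCA.
Qed.

Lemma distr_fiber {S T} (f : S -> T) (p : S -> R) (t : T) (s : S) :
  is_distr p -> push f p = dirac R t -> p s != 0 -> f s = t.
Proof.
move=> [p0 pfin _] pt /eqP ps; case: (eqVneq (f s) t) => // fst; case: (ps).
have := congr1 (fun h => h (f s)) pt.
rewrite /dirac (negbTE fst) (pushE _ _ (@subset_refl _ (supp p))) => sum0.
have F0 i : supp p i -> 0 <= (f i == f s)%:R * p i by move=> _; rewrite mulr_ge0.
by have := pfsumr_eq0 pfin F0 sum0 ps; rewrite eqxx mul1r.
Qed.

Lemma distr_supp1 {S} (p : S -> R) (s : S) :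
  is_distr p -> (forall s', p s' != 0 -> s' = s) -> p = dirac R s.
Proof.
move=> [_ _ p1] ps; have p0 s' : s' <> s -> p s' = 0.
  by move=> s's; have [//|/ps] := eqVneq (p s') 0.
apply/funext => s'; rewrite /dirac; case: eqP => [-> | /p0 //].
by rewrite -p1 -(fsbig_widen [set s] _ p) ?fsbig_set1 // => s'' [_ /p0].
Qed.

Lemma distr_on_supp_finite {E Y : ssdata} {proj : forall n, E n -> Y n} {p : dfam R E Y} n y :
  is_distr_on proj p -> finite_set (supp (p n y)).
Proof. by move=> [pd _ _ _]; have [] := pd n y. Qed.

Lemma distr_on_fiber {E Y : ssdata} {proj : forall n, E n -> Y n} {p : dfam R E Y} {n y e} :
  is_distr_on proj p -> p n y e != 0 -> proj n e = y.
Proof. by move=> [pd _ _ ppi]; apply: distr_fiber (pd n y) (ppi n y). Qed.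

End Pushforward.

Lemma subrBB (V : zmodType) (a b c : V) : (a - b) - (a - c) = c - b.
Proof. by rewrite opprB addrC addrA subrK. Qed.

Section NerveAlgebra.
Variable H : zmodType.

Lemma ffun_ord0_eq (f g : {ffun 'I_0 -> H}) : f = g.
Proof. by apply/ffunP => -[]. Qed.

Lemma gatE n (g : {ffun 'I_n -> H}) (k : 'I_n) : gat g k = g k.
Proof. by rewrite /gat valK. Qed.

Lemma gatO {n} (g : {ffun 'I_n -> H}) {k} (kn : (k < n)%N) : gat g k = g (Ordinal kn).
Proof. by rewrite /gat insubT. Qed.

Lemma gat_out n (g : {ffun 'I_n -> H}) k : (n <= k)%N -> gat g k = 0.
Proof. by move=> nk; rewrite /gat insubF // ltnNge nk. Qed.

Lemma gatB n (g g' : {ffun 'I_n -> H}) k : gat (g - g') k = gat g k - gat g' k.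
Proof.
case: (ltnP k n) => kn; last by rewrite !gat_out // subr0.
by rewrite !(gatO _ kn) !ffunE.
Qed.

Lemma gat0 n k : gat (0 : {ffun 'I_n -> H}) k = 0.
Proof.
case: (ltnP k n) => kn; last by rewrite gat_out.
by rewrite (gatO _ kn) ffunE.
Qed.

Lemma nfaceB n i (g g' : {ffun 'I_n.+1 -> H}) :
  nface i (g - g') = nface i g - nface i g'.
Proof.
apply/ffunP => k; rewrite !ffunE !gatB.
by case: ifP => _; [|case: ifP => _]; rewrite // opprD addrACA.
Qed.

Lemma ndegenB n j (g g' : {ffun 'I_n -> H}) :
  ndegen j (g - g') = ndegen j g - ndegen j g'.
Proof.
apply/ffunP => k; rewrite !ffunE !gatB.
by case: ifP => _; [|case: ifP => _]; rewrite // subr0.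
Qed.

Lemma nface0 n i : nface i (0 : {ffun 'I_n.+1 -> H}) = 0.
Proof. by rewrite -(subrr 0) nfaceB subrr. Qed.

Lemma ndegen0 n j : ndegen j (0 : {ffun 'I_n -> H}) = 0.
Proof. by rewrite -(subrr 0) ndegenB subrr. Qed.

Lemma nface_first_last_eq0 m (g : {ffun 'I_m.+2 -> H}) :
  nface 0 g = 0 -> nface m.+2 g = 0 -> g = 0.
Proof.
move=> g0 gl; apply/ffunP => k; rewrite ffunE -gatE.
case: (ltnP k m.+1) => km.
  by move/ffunP/(_ (Ordinal km)): gl; rewrite !ffunE ifT.
have -> : (k : nat) = m.+1 by have := ltn_ord k; lia.
by move/ffunP/(_ ord_max): g0; rewrite !ffunE.
Qed.

Variable Y : ssdata.

Lemma etaSS (gamma : Y 2%N -> H) m (y : Y m.+3) : Defs.eta gamma y =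
  [ffun k : 'I_m.+2 => if k == 0%N :> nat then gamma (front2 y)
     else gat (Defs.eta gamma (face 1 y) - Defs.eta gamma (face 0 y)) k.-1].
Proof. by []. Qed.

Lemma etaB (gamma gamma' : Y 2%N -> H) n (y : Y n.+1) :
  Defs.eta (fun z => gamma z - gamma' z) y = Defs.eta gamma y - Defs.eta gamma' y.
Proof.
elim: n y => [|[|m] IH] y; first exact: ffun_ord0_eq.
  by apply/ffunP => k; rewrite !ffunE.
apply/ffunP => k; rewrite !etaSS !ffunE; case: ifP => // _.
rewrite !gatB !IH !gatB.
by rewrite !opprB addrACA [RHS]addrACA [X in _ + X = _]addrC.
Qed.
End NerveAlgebra.
Arguments gatO {H n} g {k}.
Arguments ffun_ord0_eq {H}.

Section Edges.
Variables (H : zmodType) (X : ssdata) (Z : forall n, pred (X n)) (nu : X 1%N -> H).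
Hypothesis hX : is_sSet X.
Hypothesis hZ : is_subcomplex Z.
Hypothesis nu_degen : forall z : X 0%N, z \in Z 0%N -> nu (degen 0 z) = 0.

Let nt := nutilde Z nu.

(* [nu_edge y a b] is nu~ on the edge of y spanned by its vertices a < b, and 0 unless
   a < b <= n. *)
Fixpoint nu_edge (n : nat) : X n -> nat -> nat -> H :=
  match n return X n -> nat -> nat -> H with
  | 0 => fun _ _ _ => 0
  | m.+1 =>
    match m return (X m -> nat -> nat -> H) -> X m.+1 -> nat -> nat -> H with
    | 0 => fun _ y a b => if (a == 0%N) && (b == 1%N) then nt y else 0
    | p.+1 => fun rec y a b =>
       if (a < b <= p.+2)%N then
         if (b < p.+2)%N then rec (face p.+2 y) a b
         else if a == 0%N then rec (face 1 y) 0 p.+1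
         else rec (face 0 y) a.-1 p.+1
       else 0
    end (@nu_edge m)
  end.
Arguments nu_edge {n}.

Lemma nu_edge_guard n (y : X n) a b : ~~ (a < b <= n)%N -> nu_edge y a b = 0.
Proof.
case: n y => [//|[|p]] y guard /=; last by rewrite (negbTE guard).
by case: ifP guard => // /andP[/eqP-> /eqP->].
Qed.

Lemma nu_edge_below n (y : X n.+1) a b :
  (b <= n)%N -> nu_edge y a b = nu_edge (face n.+1 y) a b.
Proof.
case: n y => [|p] y bn; first by rewrite nu_edge_guard //; lia.
rewrite [LHS]/=; case: ifP => [_|guard]; first by rewrite ifT.
by rewrite nu_edge_guard //; move: guard bn; lia.
Qed.

Lemma nu_edge_top0 n (y : X n.+1) :
  (0 < n)%N -> nu_edge y 0 n.+1 = nu_edge (face 1 y) 0 n.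
Proof. by case: n y => [//|p] y _; rewrite [LHS]/= ltnn ifT. Qed.

Lemma nu_edge_topS n (y : X n.+1) a : nu_edge y a.+1 n.+1 = nu_edge (face 0 y) a n.
Proof.
case: n y => [|p] y; first by rewrite nu_edge_guard.
rewrite [LHS]/= ltnn; case: ifP => [//|guard].
by rewrite nu_edge_guard //; move: guard; lia.
Qed.

Lemma nu_edge_face n (y : X n.+1) i a b : (i <= n.+1)%N ->
  nu_edge (face i y) a b = nu_edge y (bump i a) (bump i b).
Proof.
have [face_face _ _ _ _] := hX.
elim: n y i a b => [|n IH] y i a b hi.
  rewrite [RHS]/=; case: ifP => // /andP[/eqP ha /eqP hb].
  by exfalso; move: ha hb; rewrite /bump; lia.
have [guard|guard] := boolP (a < b <= n.+1)%N; last first.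
  by rewrite !nu_edge_guard //; move: guard; rewrite /bump; lia.
have [-> | ilt] := eqVneq i n.+2.
  have [-> ->] : bump n.+2 a = a /\ bump n.+2 b = b by rewrite /bump; lia.
  by rewrite [RHS]nu_edge_below //; lia.
have {ilt} hi : (i <= n.+1)%N by lia.
have [bn|nb] := leqP b n.
  rewrite [LHS]nu_edge_below // -(face_face _ i n.+2) // IH // -nu_edge_below //.
  by rewrite /bump; lia.
have -> : bump i b = n.+2 by rewrite /bump; lia.
have -> : b = n.+1 by lia.
case: i hi => [|i] hi; first by rewrite /bump leq0n add1n nu_edge_topS.
case: a guard => [|a] guard.
  rewrite (_ : bump i.+1 0 = 0) // [RHS]nu_edge_top0 //.
  case: i hi => [//|i] hi.
  rewrite [LHS]nu_edge_top0; last lia.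
  rewrite face_face; [|lia..]; rewrite IH; last lia.
  by rewrite (_ : bump i.+1 n = n.+1) // /bump; lia.
rewrite bumpS !nu_edge_topS face_face; [|lia..]; rewrite IH; last lia.
by rewrite (_ : bump i n = n.+1) // /bump; lia.
Qed.

Lemma nt_degen (y : X 0%N) : nt (degen 0 y) = 0.
Proof.
rewrite /nt /nutilde; case: ifP => // hy; apply: nu_degen.
have [_ _ _ face_degen_id _] := hX; have [hZf _] := hZ.
by rewrite -[y](proj1 (face_degen_id 0%N 0%N y isT)) hZf.
Qed.

Lemma nu_edge0_degen n (y : X n) j b : (j <= n)%N ->
  nu_edge (degen j y) 0 b = nu_edge y 0 (unbump j b).
Proof.
have [_ _ face_degen_lt face_degen_id face_degen_gt] := hX.
elim: n y j b => [|n IH] y j b hj.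
  have -> : j = 0%N by lia.
  by rewrite [LHS]/= nt_degen; case: ifP.
have [guard|guard] := boolP (0 < b <= n.+2)%N; last first.
  by rewrite !nu_edge_guard //; move: guard; rewrite /unbump; lia.
have [bn|nb] := leqP b n.+1.
  rewrite [LHS]nu_edge_below //; case: (ltnP j n.+1) => jn.
    rewrite face_degen_gt; [|lia..]; rewrite IH; last lia.
    by rewrite [RHS]nu_edge_below // /unbump; lia.
  have -> : j = n.+1 by lia.
  by rewrite (proj2 (face_degen_id _ _ _ (leqnn _))) (_ : unbump n.+1 b = b) // /unbump; lia.
have -> : b = n.+2 by lia.
have -> : unbump j n.+2 = n.+1 by rewrite /unbump; lia.
rewrite nu_edge_top0 //; case: j hj => [|[|j]] hj.
- by rewrite (proj2 (face_degen_id _ _ _ (leq0n _))).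
- by rewrite (proj1 (face_degen_id _ 1%N _ hj)).
rewrite face_degen_lt; [|lia..]; rewrite IH; last lia.
have -> : unbump j.+2.-1 n.+1 = n by rewrite /unbump; lia.
by rewrite [RHS]nu_edge_top0 //; lia.
Qed.

Lemma nu_edge_front2 n (y : X n.+2) a b : (b <= 2)%N -> nu_edge (front2 y) a b = nu_edge y a b.
Proof.
move=> b2; elim: n y => [//|n IH] y.
by rewrite [front2 _]/= IH -nu_edge_below //; lia.
Qed.

Definition nu_diff {n} (x : X n) a k := nu_edge x a k.+1 - nu_edge x a k.

Lemma cobound_nu_diff (y : X 2%N) : cobound nt y = nu_diff y 1 1 - nu_diff y 0 1.
Proof.
rewrite /cobound /nu_diff !big_ord_recl big_ord0 /= addr0 subr0 opprB.
by rewrite [- _ + _]addrC.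
Qed.

(* On Z this is the H-part of phi_nu, see [Zsection_unique]. *)
Definition nu_sec n (x : X n) : {ffun 'I_n -> H} := [ffun k : 'I_n => nu_diff x 0 k].
Arguments nu_sec {n}.

Lemma gat_nu_sec n (x : X n) k : (k < n)%N -> gat (nu_sec x) k = nu_diff x 0 k.
Proof. by move=> kn; rewrite (gatO _ kn) ffunE. Qed.

Lemma nu_sec1 (x : X 1%N) : nu_sec x = [ffun => nt x].
Proof. by apply/ffunP => -[[|//] k]; rewrite !ffunE /nu_diff /= subr0. Qed.

Lemma nu_sec_face n (x : X n.+1) i : (0 < i <= n.+1)%N ->
  nu_sec (face i x) = nface i (nu_sec x).
Proof.
move=> hi; apply/ffunP => k; have kn := ltn_ord k.
rewrite !ffunE /nu_diff !nu_edge_face; [|lia..].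
have -> : bump i 0 = 0 by rewrite /bump; lia.
case: ltnP => [ki | ik].
  rewrite gat_nu_sec; last lia.
  by have [-> ->] : bump i k.+1 = k.+1 /\ bump i k = k by rewrite /bump; lia.
case: eqP => ki.
  rewrite !gat_nu_sec /nu_diff; [|lia..].
  have [-> ->] : bump i k.+1 = k.+2 /\ bump i k = k by rewrite /bump; lia.
  by rewrite [RHS]addrC addrA subrK.
rewrite gat_nu_sec; last lia.
by have [-> ->] : bump i k.+1 = k.+2 /\ bump i k = k.+1 by rewrite /bump; lia.
Qed.

Lemma nu_sec_degen n (x : X n) j : (j <= n)%N -> nu_sec (degen j x) = ndegen j (nu_sec x).
Proof.
move=> hj; apply/ffunP => k; have kn := ltn_ord k.
rewrite !ffunE /nu_diff !nu_edge0_degen //.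
case: ltnP => kj.
  rewrite gat_nu_sec; last lia.
  by have [-> ->] : unbump j k.+1 = k.+1 /\ unbump j k = k by rewrite /unbump; lia.
case: eqP => kj'.
  have [-> ->] : unbump j k.+1 = k /\ unbump j k = k by rewrite /unbump; lia.
  exact: subrr.
rewrite gat_nu_sec; last lia.
by have [-> ->] : unbump j k.+1 = k.-1.+1 /\ unbump j k = k.-1 by rewrite /unbump; lia.
Qed.

Lemma eta_cobound n (x : X n.+1) (k : 'I_n) :
  Defs.eta (cobound nt) x k = nu_diff x 1 k.+1 - nu_diff x 0 k.+1.
Proof.
elim: n x k => [|[|m] IH] x k; first by case: k.
  by rewrite ffunE cobound_nu_diff; case: k => -[].
rewrite etaSS ffunE; case: ifP => [/eqP k0 | /negbT k0].
  by rewrite cobound_nu_diff /nu_diff !nu_edge_front2 // k0.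
have km : (k.-1 < m.+1)%N by move: k0 (ltn_ord k); lia.
rewrite gatB !(gatO _ km) !IH /nu_diff !nu_edge_face //.
have -> : k.-1.+1 = k by lia.
have [-> ->] : bump 1 k = k.+1 /\ bump 1 k.+1 = k.+2 by rewrite /bump; lia.
exact: subrBB.
Qed.

Lemma nu_sec_face0 n (x : X n.+1) :
  nu_sec (face 0 x) = nface 0 (nu_sec x) + Defs.eta (cobound nt) x.
Proof.
apply/ffunP => k; rewrite !ffunE eta_cobound /= gat_nu_sec; last exact: ltn_ord.
by rewrite /nu_diff !nu_edge_face // [RHS]addrC subrK.
Qed.
End Edges.
Arguments nu_sec {H X} Z nu {n} x.

Section Quotient.
Variables (X : ssdata) (Z : forall n, pred (X n)).
Hypothesis hZ : is_subcomplex Z.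

Lemma qproj_in n (x : X n) : x \in Z n -> qproj Z x = None.
Proof. by move=> xZ; rewrite /qproj insubF // xZ. Qed.

Lemma qproj_notin {n} {x : X n} (xZ : x \notin Z n) : qproj Z x = Some (exist _ x xZ).
Proof. by rewrite /qproj insubT. Qed.

Lemma qproj_val n (x : {x : X n | x \notin Z n}) : qproj Z (val x) = Some x.
Proof. exact: valK. Qed.

Lemma qproj_face n (x : X n.+1) i : (i <= n.+1)%N -> qproj Z (face i x) = face i (qproj Z x).
Proof.
move=> hi; case: (boolP (x \in Z n.+1)) => xZ; last by rewrite (qproj_notin xZ).
by rewrite !qproj_in //; apply: (proj1 hZ).
Qed.

Lemma qproj_degen n (x : X n) j : (j <= n)%N -> qproj Z (degen j x) = degen j (qproj Z x).
Proof.
move=> hj; case: (boolP (x \in Z n)) => xZ; last by rewrite (qproj_notin xZ).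
by rewrite !qproj_in //; apply: (proj2 hZ).
Qed.

Lemma qproj_front2 n (x : X n.+2) : qproj Z (front2 x) = front2 (qproj Z x).
Proof. by elim: n x => [//|n IH] x; rewrite [front2 x]/= IH qproj_face. Qed.

Lemma front2_base n : front2 (None : quot Z n.+2) = None.
Proof. by elim: n. Qed.

Variable H : zmodType.

Lemma eta_qproj (beta : quot Z 2%N -> H) n (x : X n.+1) :
  Defs.eta beta (qproj Z x) = Defs.eta (fun y => beta (qproj Z y)) x.
Proof.
elim: n x => [|[|m] IH] x; first exact: ffun_ord0_eq.
  by apply/ffunP => k; rewrite !ffunE.
apply/ffunP => k; rewrite !etaSS !ffunE qproj_front2; case: ifP => // _.
by rewrite -!qproj_face // !IH.
Qed.

Lemma eta_base (beta : quot Z 2%N -> H) : normalized beta ->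
  forall n, Defs.eta beta (None : quot Z n.+1) = 0.
Proof.
move=> beta_norm; have beta0 : beta None = 0 := beta_norm 0%N None isT.
elim=> [|[|m] IH]; first exact: ffun_ord0_eq.
  by apply/ffunP => k; rewrite !ffunE beta0.
apply/ffunP => k; rewrite etaSS !ffunE; case: ifP => _.
  by rewrite front2_base.
by rewrite [face 1 _]/= [face 0 _]/= IH subrr gat0.
Qed.
End Quotient.
Arguments qproj_notin {X Z n x}.
Arguments qproj_val {X Z n}.

Section Untwisting.
Variables (R : realType) (H : zmodType) (X : ssdata) (Z : forall n, pred (X n))
  (alpha : X 2%N -> H) (nu : X 1%N -> H) (beta : quot Z 2%N -> H).
Hypothesis hX : is_sSet X.
Hypothesis hZ : is_subcomplex Z.
Hypothesis nu_degen : forall z : X 0%N, z \in Z 0%N -> nu (degen 0 z) = 0.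
Hypothesis beta_norm : normalized beta.
Hypothesis beta_alpha :
  forall x : X 2%N, beta (qproj Z x) = alpha x - cobound (nutilde Z nu) x.

Notation EX := (twisted alpha).
Notation EQ := (twisted beta).
Notation sec := (nu_sec Z nu).

Definition untwist n (e : tlev H X n) : tlev H (quot Z) n := (e.1 - sec e.2, qproj Z e.2).
Definition retwist n (x : X n) (e : tlev H (quot Z) n) : tlev H X n := (e.1 + sec x, x).
Arguments untwist {n}.
Arguments retwist {n}.

Lemma retwist_untwist {n x} {e : tlev H X n} : e.2 = x -> retwist x (untwist e) = e.
Proof. by case: e => g y /= ->; rewrite /retwist /untwist /= subrK. Qed.

Lemma untwist_retwist {n x} {e : tlev H (quot Z) n} : e.2 = qproj Z x -> untwist (retwist x e) = e.
Proof. by case: e => g y /= ->; rewrite /retwist /untwist /= addrK. Qed.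

Lemma untwist_inj n (e e' : tlev H X n) : e.2 = e'.2 -> untwist e = untwist e' -> e = e'.
Proof.
by move=> ee' ue; rewrite -(retwist_untwist (erefl e.2)) ue (retwist_untwist (esym ee')).
Qed.

Lemma eta_alpha_split n (x : X n.+1) :
  Defs.eta alpha x = Defs.eta (cobound (nutilde Z nu)) x + Defs.eta beta (qproj Z x).
Proof.
rewrite eta_qproj //.
rewrite (_ : (fun y => _) = fun y => alpha y - cobound (nutilde Z nu) y); last exact/funext.
by rewrite etaB addrC subrK.
Qed.

Lemma untwist_face n i (e : tlev H X n.+1) : (i <= n.+1)%N ->
  untwist (@face EX n i e) = @face EQ n i (untwist e).
Proof.
case: e => g x hi; rewrite /untwist /= /tface /=.
congr (_, _); last exact: qproj_face.
case: (eqVneq i 0%N) => [-> | i0]; last by rewrite nu_sec_face ?nfaceB //; lia.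
rewrite nu_sec_face0 // eta_alpha_split nfaceB.
have AC (a b c t : {ffun 'I_n -> H}) : (a + (t + b)) - (c + t) = a - c + b.
  by rewrite opprD addrACA [t + b]addrC addrK.
exact: AC.
Qed.

Lemma untwist_degen n j (e : tlev H X n) : (j <= n)%N ->
  untwist (@degen EX n j e) = @degen EQ n j (untwist e).
Proof.
case: e => g x hj; rewrite /untwist /= /tdegen /=.
by rewrite qproj_degen // nu_sec_degen // ndegenB.
Qed.

Lemma untwist_sec n (z : X n) : z \in Z n -> untwist (sec z, z) = (0, None).
Proof. by move=> zZ; rewrite /untwist subrr qproj_in. Qed.

Lemma face_base n i : @face EQ n i (0, None) = (0, None).
Proof. by rewrite /= /tface /=; case: ifP => _; rewrite nface0 ?eta_base ?addr0. Qed.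

Lemma degen_base n j : @degen EQ n j (0, None) = (0, None).
Proof. by rewrite /= /tdegen /= ndegen0. Qed.

Lemma nu_sec_Zsection : is_Zsection alpha Z (fun n x => sec x).
Proof.
have [hZf hZd] := hZ; split => [n i z hi zZ | n j z hj zZ]; apply: untwist_inj => //.
  by rewrite untwist_face // !untwist_sec ?face_base ?hZf.
by rewrite untwist_degen // !untwist_sec ?degen_base ?hZd.
Qed.

Lemma Zsection_unique {sigma : forall n, X n -> {ffun 'I_n -> H}} :
  is_Zsection alpha Z sigma ->
  (forall z : X 1%N, z \in Z 1%N -> sigma 1%N z = [ffun _ => nu z]) ->
  forall n z, z \in Z n -> sigma n z = sec z.
Proof.
move=> [sf _] s1.
have diff_face n i (z : X n.+1) : (i <= n.+1)%N -> z \in Z n.+1 ->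
    nface i (sigma n.+1 z - sec z) = sigma n (face i z) - sec (face i z).
  move=> hi zZ; have := congr1 untwist (sf n i z hi zZ); rewrite untwist_face //.
  rewrite /untwist /= qproj_in //= /tface /= eta_base // addr0 => /(congr1 fst) /= <-.
  by case: ifP => // /eqP ->.
elim=> [|[|m] IH] z zZ; first exact: ffun_ord0_eq.
  by rewrite s1 // nu_sec1; apply/ffunP => k; rewrite !ffunE /nutilde zZ.
apply/eqP; rewrite -subr_eq0; apply/eqP; apply: nface_first_last_eq0.
  by rewrite diff_face // IH ?subrr //; apply: (proj1 hZ).
by rewrite diff_face // IH ?subrr //; apply: (proj1 hZ).
Qed.

Lemma sDist_base {q : dfam R EQ (quot Z)} : sDist q ->
  forall n, q n None = dirac R ((0, None) : EQ n).
Proof.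
move=> hq; have [qd _ qdg _] := hq.
elim=> [|n IH].
  apply: (@distr_supp1 _ (EQ 0%N) _ (0, None) (qd 0%N None)).
  by move=> -[g o] /(distr_on_fiber hq) /= ->; rewrite (ffun_ord0_eq g 0).
by rewrite [in LHS](_ : None = degen 0 (None : quot Z n)) // -qdg // IH push_dirac degen_base.
Qed.

Lemma sDist_rel_in {p : dfam R EX X} {n} {z : X n} : sDist_rel Z nu p ->
  z \in Z n -> p n z = dirac R (sec z, z).
Proof.
move=> [_ hr] zZ; apply: hr nu_sec_Zsection _ n z zZ => z1 z1Z.
by rewrite nu_sec1; apply/ffunP => k; rewrite !ffunE /nutilde z1Z.
Qed.

Definition lift_dist (q : dfam R EQ (quot Z)) : dfam R EX X :=
  fun n x => push (retwist x) (q n (qproj Z x)).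

Definition desc_dist (p : dfam R EX X) : dfam R EQ (quot Z) :=
  fun n o => if o is Some x then push untwist (p n (val x)) else dirac R (0, None).

Lemma desc_dist_qproj (p : dfam R EX X) : sDist_rel Z nu p ->
  forall n x, desc_dist p n (qproj Z x) = push untwist (p n x).
Proof.
move=> hp n x; case: (boolP (x \in Z n)) => xZ; last by rewrite (qproj_notin xZ).
by rewrite qproj_in // (sDist_rel_in hp xZ) push_dirac untwist_sec.
Qed.

Lemma lift_dist_natural (q : dfam R EQ (quot Z)) m m' (fX : X m -> X m')
    (fE : EX m -> EX m') (fQ : EQ m -> EQ m') (x : X m) :
  sDist q -> (forall e, (fE e).2 = fX e.2) ->
  (forall e, untwist (fE e) = fQ (untwist e)) ->
  push fQ (q m (qproj Z x)) = q m' (qproj Z (fX x)) ->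
  push fE (lift_dist q m x) = lift_dist q m' (fX x).
Proof.
move=> hq fE2 fEQ qfQ; have qfin := distr_on_supp_finite m (qproj Z x) hq.
rewrite /lift_dist -qfQ !push_comp //; apply: eq_push => e /(distr_on_fiber hq) e2 /=.
by rewrite -[fE _](retwist_untwist (fE2 _)) fEQ (untwist_retwist e2).
Qed.

Lemma desc_dist_natural (p : dfam R EX X) m m' (fX : X m -> X m')
    (fE : EX m -> EX m') (fQ : EQ m -> EQ m') (x : X m) :
  sDist_rel Z nu p -> (forall e, untwist (fE e) = fQ (untwist e)) ->
  push fE (p m x) = p m' (fX x) ->
  push fQ (desc_dist p m (qproj Z x)) = desc_dist p m' (qproj Z (fX x)).
Proof.
move=> hp fEQ pfE; have pfin := distr_on_supp_finite m x (proj1 hp).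
rewrite !desc_dist_qproj // -pfE !push_comp //.
by congr push; apply/funext => e /=; rewrite fEQ.
Qed.

Lemma desc_dist_sDist (p : dfam R EX X) : sDist_rel Z nu p -> sDist (desc_dist p).
Proof.
move=> hp; have [[pd pf pdg ppi] _] := hp; split.
- move=> n [x|]; last exact: dirac_distr.
  by rewrite -(qproj_val x) desc_dist_qproj //; apply: push_distr; apply: pd.
- move=> n i [x|] hi; last by rewrite push_dirac face_base.
  rewrite -(qproj_val x) -qproj_face //.
  apply: (@desc_dist_natural p _ _ (face i) (face i)) => //.
    by move=> e; apply: untwist_face.
  exact: pf.
- move=> n j [x|] hj; last by rewrite push_dirac degen_base.
  rewrite -(qproj_val x) -qproj_degen //.
  apply: (@desc_dist_natural p _ _ (degen j) (degen j)) => //.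
    by move=> e; apply: untwist_degen.
  exact: pdg.
- move=> n [x|]; last by rewrite push_dirac.
  have pfin := distr_on_supp_finite n (val x) (proj1 hp).
  rewrite -(qproj_val x) desc_dist_qproj // push_comp //.
  by rewrite -push_dirac -ppi push_comp.
Qed.

Lemma lift_dist_sDist (q : dfam R EQ (quot Z)) : sDist q -> sDist_rel Z nu (lift_dist q).
Proof.
move=> hq; have [qd qf qdg qpi] := hq; split; first split.
- by move=> n x; apply: push_distr; apply: qd.
- move=> n i x hi; apply: (@lift_dist_natural q _ _ (face i) (face i)) => //.
    by move=> e; apply: untwist_face.
  by rewrite qf // qproj_face.
- move=> n j x hj; apply: (@lift_dist_natural q _ _ (degen j) (degen j)) => //.
    by move=> e; apply: untwist_degen.
  by rewrite qdg // qproj_degen.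
- move=> n x; rewrite /lift_dist push_comp; last exact: distr_on_supp_finite _ _ hq.
  by apply: push_const; apply: qd.
- move=> sigma hs hs1 n z zZ.
  rewrite (Zsection_unique hs hs1 _ _ zZ) /lift_dist qproj_in // (sDist_base hq) push_dirac.
  by rewrite /retwist /= add0r.
Qed.

Lemma desc_lift_dist (q : dfam R EQ (quot Z)) : sDist q -> desc_dist (lift_dist q) = q.
Proof.
move=> hq; apply: functional_extensionality_dep => n; apply/funext => -[x|]; last first.
  by rewrite (sDist_base hq).
have qfin := distr_on_supp_finite n (Some x : quot Z n) hq.
rewrite /desc_dist /lift_dist qproj_val push_comp // -[RHS]push_id.
apply: eq_push => e /(distr_on_fiber hq) e2; apply: untwist_retwist.
by rewrite qproj_val.
Qed.

Lemma lift_desc_dist (p : dfam R EX X) : sDist_rel Z nu p -> lift_dist (desc_dist p) = p.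
Proof.
move=> hp; apply: functional_extensionality_dep => n; apply/funext => x.
have pfin := distr_on_supp_finite n x (proj1 hp).
rewrite /lift_dist desc_dist_qproj // push_comp // -[RHS]push_id.
by apply: eq_push => e /(distr_on_fiber (proj1 hp)) e2; apply: retwist_untwist.
Qed.

Lemma lift_dist_mix t (q q' : dfam R EQ (quot Z)) : sDist q -> sDist q' ->
  lift_dist (dmix t q q') = dmix t (lift_dist q) (lift_dist q').
Proof.
move=> hq hq'; apply: functional_extensionality_dep => n; apply/funext => x.
rewrite /lift_dist /dmix push_mix //.
  exact: distr_on_supp_finite _ _ hq.
exact: distr_on_supp_finite _ _ hq'.
Qed.
End Untwisting.
Arguments lift_dist {R H X Z alpha} nu {beta} q.
Arguments desc_dist {R H X Z alpha} nu {beta} p.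

Theorem mainTheorem3 (R : realType) (H : zmodType) (X : ssdata)
  (Z : forall n, pred (X n)) (alpha : X 2%N -> H) (nu : X 1%N -> H)
  (beta : quot Z 2%N -> H) :
  is_sSet X -> is_subcomplex Z ->
  (* alpha : normalized 2-cocycle on X *)
  @normalized H X 1%N alpha -> @cocycle H X 2%N alpha ->
  (* nu : normalized 1-cochain on Z with  d nu = i^* alpha *)
  (forall z : X 0%N, z \in Z 0%N -> nu (@degen X 0%N 0 z) = 0) ->
  (forall z : X 2%N, z \in Z 2%N -> @cobound H X 1%N nu z = alpha z) ->
  (* beta : normalized 2-cocycle on X/Z with  j^* beta = alpha - d nu~ *)
  @normalized H (quot Z) 1%N beta -> @cocycle H (quot Z) 2%N beta ->
  (forall x : X 2%N, beta (qproj Z x) = alpha x - @cobound H X 1%N (nutilde Z nu) x) ->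
  convex_iso (@sDist R H (quot Z) beta) (@sDist_rel R H X alpha Z nu).
Proof.
move=> hX hZ _ _ nu_degen _ beta_norm _ beta_alpha.
exists (lift_dist nu), (desc_dist nu); split.
- by move=> q; apply: lift_dist_sDist.
- by move=> p; apply: desc_dist_sDist.
- by move=> q; apply: desc_lift_dist.
- by move=> p; apply: lift_desc_dist.
- by move=> t q q' _; apply: lift_dist_mix.
Qed.
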